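(* Assume the setup below. Suppose that at time $t_0$ the set $\{\delta X(s,\alpha(t_0)):s\in T\}$ satisfies Condition B at the point $0$ with constants $m_0\ge0$, $\kappa>1$, $\delta>0$, $\sigma>0$, $I_0>0$. Let $0<\eta\le I_0$ and $0<\delta_0<\delta$ with $\nu(G_\eta(t_0))>1-\delta_0$. Then for every $\ell$ with $0<\ell\le\eta$, $$\nu\big(\{s\in T:0\le\delta X(s,\alpha(t_0))<\ell\}\big)<m_0+\delta_0\,(1+\sigma)\left(\frac{\ell}{\eta}\right)^{\log(1+\sigma)/\log\kappa}.$$
   Context: Setup. Fix integers $n\ge1$, $K\ge 2$. $T\subset\mathbb R^n$ is a finite set; each $s\in T$ has a class $i(s)\in\{1,\dots,K\}$ and a weight $\nu(s)\in(0,1]$ with $\sum_{s\in T}\nu(s)=1$; for $A\subset T$, $\nu(A)=\sum_{s\in A}\nu(s)$. A parametrized family $X(\cdot,\alpha):\mathbb R^n\to\mathbb R^K$ is given; $\delta X(s,\alpha)=X_{i(s)}(s,\alpha)-\max_{j\ne i(s)}X_j(s,\alpha)$. A training trajectory is a family of parameters $\alpha(t)$ indexed by times $t$. Good set: $G_\eta(t)=\{s\in T:\delta X(s,\alpha(t))>\eta\}$. For an interval $I\subset\mathbb R$ with center $c$ and $\lambda>0$, $\lambda I=\{c+\lambda(x-c):x\in I\}$; $|I|$ is the length of $I$. Condition B at the point $0$ at time $t_0$ with constants $m_0\ge0$, $\kappa>1$, $\delta>0$, $\sigma>0$, $I_0>0$: for every interval $I\subset\mathbb R$ containing $0$ with $|I|<I_0$,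 $$\nu(\{s\in T:\delta X(s,\alpha(t_0))\in\kappa I\})\ge\min\Big\{\delta,\ \max\big\{m_0,\ (1+\sigma)\,\nu(\{s\in T:\delta X(s,\alpha(t_0))\in I\})\big\}\Big\}.$$ *)

From Stdlib Require Import Reals Lra List Arith ClassicalEpsilon.
From Stdlib Require Fin.
Open Scope R_scope.

Definition Rn (n : nat) : Type := Fin.t n -> R.

(* Weighted measure nu(A) = sum_{s in T, P s} nu(s), T given as a duplicate-free list. *)
Definition nu_of {S : Type} (T : list S) (nu : S -> R) (P : S -> Prop) : R :=
  fold_right (fun s acc =>
    (if excluded_middle_informative (P s) then nu s else 0) + acc) 0 T.

(* max_{j in {1..K}, j <> i} x j  (K >= 2 guarantees non-emptiness). *)
Definition max_other (K i : nat) (x : nat -> R) : R :=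
  match filter (fun j => negb (Nat.eqb j i)) (seq 1 K) with
  | nil => 0
  | j0 :: js => fold_right (fun j m => Rmax (x j) m) (x j0) js
  end.

(* delta X(s, alpha) = X_{i(s)}(s, alpha) - max_{j <> i(s)} X_j(s, alpha);
   classes/components indexed 1..K. *)
Definition deltaX {n : nat} {P : Type} (K : nat) (cls : Rn n -> nat)
  (X : Rn n -> P -> nat -> R) (s : Rn n) (a : P) : R :=
  X s a (cls s) - max_other K (cls s) (X s a).

(* An interval of R with endpoints a <= b; ca / cb say whether the left / right
   endpoint is included. *)
Definition in_interval (a b : R) (ca cb : bool) (x : R) : Prop :=
  (a < x \/ (ca = true /\ x = a)) /\ (x < b \/ (cb = true /\ x = b)).

(* For I with endpoints a<=b, the
   dilation lambda I about its center c=(a+b)/2 has endpoints c+lambda(a-c),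
   c+lambda(b-c) (same endpoint types); |I| = b - a. *)
Definition conditionB {S : Type} (T : list S) (nu : S -> R) (d : S -> R)
  (m0 kappa delta sigma I0 : R) : Prop :=
  forall (a b : R) (ca cb : bool),
    a <= b -> in_interval a b ca cb 0 -> b - a < I0 ->
    let c := (a + b) / 2 in
    nu_of T nu (fun s => in_interval (c + kappa * (a - c)) (c + kappa * (b - c)) ca cb (d s))
    >= Rmin delta (Rmax m0 ((1 + sigma) * nu_of T nu (fun s => in_interval a b ca cb (d s)))).

(* Put c := l/2 and let V j be the mass of the values in [c - c kappa^j, c + c kappa^j).
   Choose N with l kappa^N <= eta <= l kappa^(N+1).  The largest of these intervals lies
   below eta, so V N <= nu(complement of G_eta) < delta0 < delta; hence Condition B can only
   be satisfied through its (1 + sigma)-branch at every step, giving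
   (1 + sigma)^N V 0 <= V N < delta0.  Since V 0 is the mass of [0, l) and
   (1 + sigma)^(N+1) (l/eta)^(log(1+sigma)/log kappa) >= 1, the bound follows (even without
   the term m0). *)
From Stdlib Require Import Reals List Lra Lia ClassicalEpsilon.
Open Scope R_scope.

Lemma nu_of_mono {U : Type} (T : list U) (nu : U -> R) (P Q : U -> Prop) :
  (forall s, In s T -> 0 <= nu s) ->
  (forall s, In s T -> P s -> Q s) -> nu_of T nu P <= nu_of T nu Q.
Proof.
  induction T as [|a T IH]; intros Hnu HPQ; simpl; [lra|].
  assert (IH' : nu_of T nu P <= nu_of T nu Q)
    by (apply IH; intros; [apply Hnu | apply HPQ]; simpl; auto).
  assert (0 <= nu a) by (apply Hnu; simpl; auto).
  unfold nu_of in IH' |- *; simpl.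
  destruct (excluded_middle_informative (P a)) as [Hp|Hp],
    (excluded_middle_informative (Q a)) as [Hq|Hq]; try lra.
  exfalso; apply Hq, HPQ; simpl; auto.
Qed.

Lemma nu_of_compl {U : Type} (T : list U) (nu : U -> R) (P : U -> Prop) :
  nu_of T nu P + nu_of T nu (fun s => ~ P s) = nu_of T nu (fun _ => True).
Proof.
  induction T as [|a T IH]; simpl; [lra|].
  unfold nu_of in IH |- *; simpl.
  destruct (excluded_middle_informative (P a)), (excluded_middle_informative (~ P a)),
    (excluded_middle_informative True); tauto || lra.
Qed.

Lemma exists_pow_bracket (k l e : R) : 1 < k -> 0 < l <= e ->
  exists N : nat, l * k ^ N <= e <= l * k ^ S N.
Proof.
  intros Hk Hl.
  assert (Hbig : exists m, e <= l * k ^ S m).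
  { destruct (Pow_x_infinity k) with (b := e / l) as [M HM]; [rewrite Rabs_pos_eq; lra|].
    exists M; specialize (HM (S M) ltac:(lia)).
    rewrite Rabs_pos_eq in HM by (apply pow_le; lra).
    apply Rge_le, (Rmult_le_compat_l l) in HM; [|lra].
    replace (l * (e / l)) with e in HM by (field; lra); exact HM. }
  destruct Hbig as [m Hm]; induction m as [|m IH].
  - exists 0%nat; simpl; lra.
  - destruct (Rle_lt_dec e (l * k ^ S m)) as [Hle|Hlt]; [exact (IH Hle)|].
    exists (S m); lra.
Qed.

Lemma Rpower_pow_change_base (k q : R) (N : nat) : 1 < k -> 0 < q ->
  Rpower (k ^ N) (ln q / ln k) = q ^ N.
Proof.
  intros Hk Hq.
  assert (0 < ln k) by (rewrite <- ln_1; apply ln_increasing; lra).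
  rewrite <- (Rpower_pow N k), <- (Rpower_pow N q), Rpower_mult by lra.
  unfold Rpower; f_equal; field; lra.
Qed.

Lemma pow_mul_Rpower_ge1 (k q x : R) (N : nat) : 1 < k -> 1 <= q -> 0 < x ->
  1 <= k ^ N * x -> 1 <= q ^ N * Rpower x (ln q / ln k).
Proof.
  intros Hk Hq Hx Hkx.
  assert (0 <= ln q / ln k).
  { apply Rmult_le_pos.
    { destruct Hq as [Hq|<-]; [rewrite <- ln_1; apply Rlt_le, ln_increasing|rewrite ln_1]; lra. }
    apply Rlt_le, Rinv_0_lt_compat; rewrite <- ln_1; apply ln_increasing; lra. }
  rewrite <- (Rpower_pow_change_base k q N), Rpower_mult_distr by (try apply pow_lt; lra).
  rewrite <- (Rpower_O (k ^ N * x)) at 1 by lra.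
  apply Rle_Rpower; lra.
Qed.

Section CenteredMass.

Context {U : Type}.
Variables (T : list U) (nu : U -> R) (d : U -> R).
Hypothesis nu_nonneg : forall s, In s T -> 0 <= nu s.

Definition centered_mass (c r : R) : R :=
  nu_of T nu (fun s => in_interval (c - r) (c + r) true false (d s)).

Lemma centered_mass_mono (c r r' : R) : r <= r' -> centered_mass c r <= centered_mass c r'.
Proof.
  intros Hr; apply nu_of_mono; auto.
  intros s _ [[Hlo|[_ Hlo]] [Hhi|[Hf _]]]; try discriminate; split; try (left; lra).
  destruct (Rle_lt_dec r' r); [right; split; [reflexivity | lra] | left; lra].
Qed.

Lemma conditionB_centered_growth (m0 kappa delta sigma I0 c r : R) :
  conditionB T nu d m0 kappa delta sigma I0 -> 0 < c <= r -> 2 * r < I0 ->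
  centered_mass c (kappa * r) < delta ->
  (1 + sigma) * centered_mass c r <= centered_mass c (kappa * r).
Proof.
  intros HB Hcr Hr Hsmall.
  assert (H0in : in_interval (c - r) (c + r) true false 0).
  { split; [destruct (Rle_lt_dec r c); [right; split; [reflexivity|lra] | left; lra]
           | left; lra]. }
  specialize (HB (c - r) (c + r) true false ltac:(lra) H0in ltac:(lra)); cbv zeta in HB.
  replace ((c - r + (c + r)) / 2) with c in HB by field.
  replace (c + kappa * (c - r - c)) with (c - kappa * r) in HB by ring.
  replace (c + kappa * (c + r - c)) with (c + kappa * r) in HB by ring.
  fold (centered_mass c (kappa * r)) (centered_mass c r) in HB.
  unfold Rmin, Rmax in HB.
  destruct (Rle_dec delta _); [lra|].
  destruct (Rle_dec m0 _); lra.
Qed.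

Lemma conditionB_geometric_growth (m0 kappa delta sigma I0 c : R) (N : nat) :
  conditionB T nu d m0 kappa delta sigma I0 -> 1 < kappa -> 0 < sigma -> 0 < c ->
  2 * (c * kappa ^ N) <= I0 -> centered_mass c (c * kappa ^ N) < delta ->
  (1 + sigma) ^ N * centered_mass c c <= centered_mass c (c * kappa ^ N).
Proof.
  intros HB Hk Hs Hc HI Hsmall.
  assert (Hpow : forall i j, (i <= j)%nat -> c * kappa ^ i <= c * kappa ^ j)
    by (intros; apply Rmult_le_compat_l; [lra | apply Rle_pow; [lra | assumption]]).
  enough (Hj : forall j, (j <= N)%nat ->
            (1 + sigma) ^ j * centered_mass c c <= centered_mass c (c * kappa ^ j))
    by auto.
  induction j as [|j IH]; intros Hj; [simpl; rewrite Rmult_1_r; lra|].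
  assert (Hstep : (1 + sigma) * centered_mass c (c * kappa ^ j)
                  <= centered_mass c (c * kappa ^ S j)).
  { replace (c * kappa ^ S j) with (kappa * (c * kappa ^ j)) by (simpl; ring).
    apply (conditionB_centered_growth m0 kappa delta sigma I0); auto.
    - pose proof (Hpow 0%nat j ltac:(lia)); simpl in *; lra.
    - assert (0 < c * kappa ^ j) by (apply Rmult_lt_0_compat; [lra | apply pow_lt; lra]).
      pose proof (Hpow (S j) N Hj); simpl in *; nra.
    - replace (kappa * (c * kappa ^ j)) with (c * kappa ^ S j) by (simpl; ring).
      pose proof (centered_mass_mono c _ _ (Hpow (S j) N Hj)); lra. }
  specialize (IH ltac:(lia)); simpl; rewrite Rmult_assoc.
  apply Rle_trans with (2 := Hstep), Rmult_le_compat_l; lra.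
Qed.

End CenteredMass.

Theorem mainTheorem7
  (n K : nat) (HK : (2 <= K)%nat)
  (T : list (Rn n)) (HT : NoDup T)
  (cls : Rn n -> nat) (Hcls : forall s, In s T -> (1 <= cls s <= K)%nat)
  (nu : Rn n -> R) (Hnu : forall s, In s T -> 0 < nu s <= 1)
  (Hsum : nu_of T nu (fun _ => True) = 1)
  (Param : Type) (X : Rn n -> Param -> nat -> R) (alpha : R -> Param) (t0 : R)
  (m0 kappa delta sigma I0 : R)
  (Hm0 : 0 <= m0) (Hkappa : 1 < kappa) (Hdelta : 0 < delta) (Hsigma : 0 < sigma) (HI0 : 0 < I0)
  (HB : conditionB T nu (fun s => deltaX K cls X s (alpha t0)) m0 kappa delta sigma I0)
  (eta delta0 : R) (Heta : 0 < eta <= I0) (Hdelta0 : 0 < delta0 < delta)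
  (HG : nu_of T nu (fun s => deltaX K cls X s (alpha t0) > eta) > 1 - delta0) :
  forall l : R, 0 < l <= eta ->
    nu_of T nu (fun s => 0 <= deltaX K cls X s (alpha t0) < l)
    < m0 + delta0 * (1 + sigma) * Rpower (l / eta) (ln (1 + sigma) / ln kappa).
Proof.
  intros l Hl.
  set (d := fun s => deltaX K cls X s (alpha t0)) in *.
  change (nu_of T nu (fun s => d s > eta) > 1 - delta0) in HG.
  change (nu_of T nu (fun s => 0 <= d s < l)
          < m0 + delta0 * (1 + sigma) * Rpower (l / eta) (ln (1 + sigma) / ln kappa)).
  assert (Hnn : forall s, In s T -> 0 <= nu s) by (intros s Hs; specialize (Hnu s Hs); lra).
  assert (Hbad : nu_of T nu (fun s => d s < eta) < delta0).
  { pose proof (nu_of_compl T nu (fun s => d s > eta)).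
    pose proof (nu_of_mono T nu (fun s => d s < eta) (fun s => ~ d s > eta) Hnn
                  ltac:(intros; lra)).
    lra. }
  destruct (exists_pow_bracket kappa l eta Hkappa Hl) as [N [HNlo HNhi]].
  set (c := l / 2).
  assert (Htop : centered_mass T nu d c (c * kappa ^ N) < delta0).
  { eapply Rle_lt_trans, Hbad; apply nu_of_mono; auto.
    intros s _ [_ [Hs|[Hf _]]]; [unfold c in Hs; lra | discriminate]. }
  assert (Hbottom : nu_of T nu (fun s => 0 <= d s < l) <= centered_mass T nu d c c).
  { apply nu_of_mono; auto; intros s _ [[H0|H0] Hs]; unfold c.
    - split; left; lra.
    - split; [right; split; [reflexivity | lra] | left; lra]. }
  pose proof (conditionB_geometric_growth T nu d Hnn m0 kappa delta sigma I0 c N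
                HB Hkappa Hsigma ltac:(unfold c; lra) ltac:(unfold c; lra) ltac:(lra))
    as Hgrowth.
  assert (Hratio : 1 <= (1 + sigma) ^ S N * Rpower (l / eta) (ln (1 + sigma) / ln kappa)).
  { apply (pow_mul_Rpower_ge1 kappa); try lra; [apply Rdiv_lt_0_compat; lra|].
    apply (Rmult_le_reg_r eta); [lra|].
    replace (kappa ^ S N * (l / eta) * eta) with (l * kappa ^ S N) by (field; lra); lra. }
  assert (0 < (1 + sigma) ^ N) by (apply pow_lt; lra).
  simpl in Hratio.
  enough (nu_of T nu (fun s => 0 <= d s < l)
          < delta0 * (1 + sigma) * Rpower (l / eta) (ln (1 + sigma) / ln kappa)) by lra.
  apply (Rmult_lt_reg_l ((1 + sigma) ^ N)); [lra|].
  apply Rle_lt_trans with (centered_mass T nu d c (c * kappa ^ N)).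
  - eapply Rle_trans, Hgrowth; apply Rmult_le_compat_l; lra.
  - nra.
Qed.
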